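(* In HotStuff with $n$ validators, if there is a safety violation (COMMIT quorum certificates exist for two conflicting blocks), then one can identify at least $n/3$ validators each of which has violated one of the HotStuff slashing conditions.
   Context: HotStuff: execution proceeds in views, each with a leader. Votes carry a block, a view number and a type among PREPARE, PRE-COMMIT, COMMIT. A quorum certificate (QC) is a collection of at least $2n/3$ votes of the same type, view and block. In each view the leader proposes a block justified by the highest PREPARE QC it knows; validators vote PREPARE for the proposal only if it is safe (the safeNode rule: it extends the block the validator is locked on, or its justifying PREPARE QC has a higher view than the lock); given a PREPARE QC the validators vote PRE-COMMIT, and upon a PRE-COMMIT QC for a block a validator locks on it and votes COMMIT; a block is decided once it has a COMMIT QC. HotStuff slashing conditions: a validator violates a slashing condition if (1) it votes more than once for the same type and the same view, or (2) it votes COMMIT for a block $B_1$ in view $v_1$ and later votes PREPARE for a block $B_2$ conflicting with $B_1$ in a view $v_2>v_1$, unless there has been a PREPARE QC for a block conflicting with $B_1$ in some view $v$ with $v_1<v<v_2$. *)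

From mathcomp Require Import all_boot.
Set Implicit Arguments.
Unset Strict Implicit.
Unset Printing Implicit Defensive.

Inductive vtype := PREPARE | PRECOMMIT | COMMIT.

Section HotStuff.
Variable Block : Type.
Variable parent : Block -> option Block.

(* b extends a: a is an ancestor of b (or b itself) in the block tree. *)
Definition extends (b a : Block) : Prop :=
  exists k, iter k (fun o => obind parent o) (Some b) = Some a.

Definition conflicting (a b : Block) : Prop := ~ extends a b /\ ~ extends b a.

Variable V : finType.  (* the validators; n = #|V| *)
(* voted i t v B : validator i has cast a vote of type t in view v for block B *)
Variable voted : V -> vtype -> nat -> Block -> Prop.

Definition QC (t : vtype) (v : nat) (B : Block) : Prop :=
  exists Q : {set V}, 2 * #|V| <= 3 * #|Q| /\ forall i, i \in Q -> voted i t v B.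

Definition slash1 (i : V) : Prop :=
  exists t v B B', B <> B' /\ voted i t v B /\ voted i t v B'.

Definition slash2 (i : V) : Prop :=
  exists v1 B1 v2 B2,
    voted i COMMIT v1 B1 /\ voted i PREPARE v2 B2 /\ conflicting B2 B1 /\ v1 < v2 /\
    ~ (exists v B, v1 < v < v2 /\ conflicting B B1 /\ QC PREPARE v B).

Definition violates (i : V) : Prop := slash1 i \/ slash2 i.

(* Well-formedness of votes (HotStuff message validity): a PRE-COMMIT vote
   for B in view v is accompanied by a PREPARE QC for B in v, and a COMMIT
   vote by a PRE-COMMIT QC for B in v. *)
Definition justified_votes : Prop :=
  (forall i v B, voted i PRECOMMIT v B -> QC PREPARE v B) /\
  (forall i v B, voted i COMMIT v B -> QC PRECOMMIT v B).

End HotStuff.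

(** Two COMMIT certificates for conflicting blocks [B1], [B2] in views
    [v1 <= v2] each come with a quorum of at least [2n/3] validators, and any two
    such quorums share at least [n/3] validators.  If [v1 = v2], the validators
    in the intersection of the two COMMIT quorums voted twice in the same view.
    If [v1 < v2], the COMMIT certificate for [B2] is backed by a PREPARE
    certificate for [B2] in view [v2], so among the views above [v1] carrying a
    PREPARE certificate for a block conflicting with [B1] there is a least one,
    [m]; every validator in both the COMMIT quorum for [B1] and the PREPARE
    quorum of view [m] then violates slashing condition (2), the exception
    being ruled out by the minimality of [m]. *)

From Stdlib Require Import Classical Wf_nat.
From mathcomp Require Import all_boot zify.

Set Implicit Arguments.
Unset Strict Implicit.
Unset Printing Implicit Defensive.

Lemma quorum_intersection (T : finType) (A B : {set T}) :
  2 * #|T| <= 3 * #|A| -> 2 * #|T| <= 3 * #|B| -> #|T| <= 3 * #|A :&: B|.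
Proof.
move=> hA hB; have := cardsU A B; have : #|A :|: B| <= #|T| by exact: max_card.
lia.
Qed.

Lemma ex_minimal_nat (P : nat -> Prop) :
  (exists n, P n) -> exists m, P m /\ forall k, k < m -> ~ P k.
Proof.
move=> exP; have [m [[Pm m_least] _]] :=
  dec_inh_nat_subset_has_unique_least_element P (fun n => classic (P n)) exP.
exists m; split=> // k lt_km Pk.
by move/leP: (m_least k Pk); rewrite leqNgt lt_km.
Qed.

Section Accountability.

Variables (Block : Type) (parent : Block -> option Block).
Variables (V : finType) (voted : V -> vtype -> nat -> Block -> Prop).

Lemma conflicting_sym (a b : Block) :
  conflicting parent a b -> conflicting parent b a.
Proof. by case. Qed.

Lemma conflicting_neq (a b : Block) : conflicting parent a b -> a <> b.
Proof. by case=> not_ab _ eq_ab; apply: not_ab; exists 0; rewrite eq_ab. Qed.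

Definition slashable_third : Prop :=
  exists S : {set V}, #|V| <= 3 * #|S| /\ forall i, i \in S -> violates parent voted i.

Lemma slashable_third_of_quorums (Q1 Q2 : {set V}) :
  2 * #|V| <= 3 * #|Q1| -> 2 * #|V| <= 3 * #|Q2| ->
  (forall i, i \in Q1 -> i \in Q2 -> violates parent voted i) -> slashable_third.
Proof.
move=> hQ1 hQ2 hviol; exists (Q1 :&: Q2); split; first exact: quorum_intersection.
by move=> i; rewrite inE => /andP[]; exact: hviol.
Qed.

Lemma QC_voter (t : vtype) (v : nat) (B : Block) :
  0 < #|V| -> QC voted t v B -> exists i, voted i t v B.
Proof.
move=> V_gt0 [Q [hQ votedQ]].
have [i iQ] : exists i, i \in Q by apply/set0Pn; rewrite -card_gt0; lia.
by exists i; exact: votedQ.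
Qed.

Lemma commit_QC_prepare_QC (v : nat) (B : Block) :
  justified_votes voted -> 0 < #|V| ->
  QC voted COMMIT v B -> QC voted PREPARE v B.
Proof.
move=> [just_precommit just_commit] V_gt0 /(QC_voter V_gt0)[i /just_commit].
by move=> /(QC_voter V_gt0)[j /just_precommit].
Qed.

Lemma same_view_commits_slashable_third (v : nat) (B1 B2 : Block) :
  B1 <> B2 -> QC voted COMMIT v B1 -> QC voted COMMIT v B2 ->
  slashable_third.
Proof.
move=> neqB [Q1 [hQ1 votedQ1]] [Q2 [hQ2 votedQ2]].
apply: (slashable_third_of_quorums hQ1 hQ2) => i iQ1 iQ2; left.
by exists COMMIT, v, B1, B2; split; last split; [| exact: votedQ1 | exact: votedQ2].
Qed.

Lemma commit_then_conflicting_prepare_slashable_third (v1 v2 : nat) (B1 B2 : Block) :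
  v1 < v2 -> conflicting parent B2 B1 ->
  QC voted COMMIT v1 B1 -> QC voted PREPARE v2 B2 ->
  slashable_third.
Proof.
move=> lt_v12 conf21 [Q1 [hQ1 votedQ1]] prep2.
pose later_conflicting_prepare v :=
  exists B, v1 < v /\ conflicting parent B B1 /\ QC voted PREPARE v B.
have [m [[Bm [lt_v1m [confm [Qm [hQm votedQm]]]]] m_min]] :
    exists m, later_conflicting_prepare m /\
      forall k, k < m -> ~ later_conflicting_prepare k.
  by apply: ex_minimal_nat; exists v2, B2.
apply: (slashable_third_of_quorums hQ1 hQm) => i iQ1 iQm; right.
exists v1, B1, m, Bm; split; first exact: votedQ1.
split; first exact: votedQm.
do 2 (split; first by []).
by case=> v [B [/andP[lt_v1v lt_vm] [confB prepB]]]; apply: (m_min v lt_vm); exists B.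
Qed.

Lemma ordered_conflicting_commits_slashable_third (v1 v2 : nat) (B1 B2 : Block) :
  justified_votes voted -> 0 < #|V| -> v1 <= v2 -> conflicting parent B1 B2 ->
  QC voted COMMIT v1 B1 -> QC voted COMMIT v2 B2 ->
  slashable_third.
Proof.
move=> just V_gt0; rewrite leq_eqVlt => /predU1P[<- | lt_v12] conf12 commit1 commit2.
  exact: same_view_commits_slashable_third (conflicting_neq conf12) commit1 commit2.
apply: commit_then_conflicting_prepare_slashable_third lt_v12
  (conflicting_sym conf12) commit1 _.
exact: commit_QC_prepare_QC.
Qed.

End Accountability.

Theorem lemma3 (Block : Type) (parent : Block -> option Block) (V : finType)
  (voted : V -> vtype -> nat -> Block -> Prop) :
  justified_votes voted ->
  (exists v1 B1 v2 B2, conflicting parent B1 B2 /\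
     QC voted COMMIT v1 B1 /\ QC voted COMMIT v2 B2) ->
  exists S : {set V}, #|V| <= 3 * #|S| /\
    forall i, i \in S -> violates parent voted i.
Proof.
move=> just [v1 [B1 [v2 [B2 [conf12 [commit1 commit2]]]]]].
have [V0 | V_gt0] := posnP #|V|.
  by exists set0; rewrite V0; split=> // i; rewrite inE.
have [le_v12 | lt_v21] := leqP v1 v2.
  exact: ordered_conflicting_commits_slashable_third le_v12 conf12 commit1 commit2.
exact: ordered_conflicting_commits_slashable_third (ltnW lt_v21)
  (conflicting_sym conf12) commit2 commit1.
Qed.
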